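(* Let $K,m,n$ be integers with $n\ge1$ and $0\le m$, $2m+2\le K$, and let $a_j^2=\frac{j(K-j+1)}{4n^2}$. Define $r_1^2,r_3^2,\dots$ by $r_{2\ell+1}^2=a_{2\ell+2}^2+a_{2\ell+1}^2\prod_{j=1}^{\ell}\frac{a_{2j-1}^2}{r_{2j-1}^2}$ for $\ell\ge0$. For $k\ge 0$ set $$A_k^{[2m+1]}=-\frac{a_{2m+1-2(k-1)}^2}{a_{2m+2-2(k-1)}^2},\qquad B_k^{[2m+1]}=1+\frac{a_{2m+1-2k}^2}{a_{2m+2-2k}^2}=1-A_{k+1}^{[2m+1]},$$ and define $\mathcal R_k^{[2m+1]},\mathcal S_k^{[2m+1]}$ by $\mathcal R_{-1}^{[2m+1]}=1$, $\mathcal S_{-1}^{[2m+1]}=0$, $\mathcal R_0^{[2m+1]}=B_0^{[2m+1]}$, $\mathcal S_0^{[2m+1]}=1$ and, for $k\ge1$, $$\mathcal R_k^{[2m+1]}=B_k^{[2m+1]}\mathcal R_{k-1}^{[2m+1]}+A_k^{[2m+1]}\mathcal R_{k-2}^{[2m+1]},\qquad \mathcal S_k^{[2m+1]}=B_k^{[2m+1]}\mathcal S_{k-1}^{[2m+1]}+A_k^{[2m+1]}\mathcal S_{k-2}^{[2m+1]}.$$ Then $$\frac{r_{2m+1}^2}{a_{2m+2}^2}=\frac{\mathcal R_m^{[2m+1]}}{\mathcal S_m^{[2m+1]}}.$$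
   Context: The $a_j$ are the (off-diagonal) Jacobi recurrence coefficients of the orthonormal Krawtchouk polynomials with parameter $p=1/2$ on the lattice $\{i/n: i=-K/2,\dots,K/2\}$, i.e. $a_j^2=j(K-j+1)p(1-p)/n^2$ with $p=1/2$. *)

From mathcomp Require Import all_boot all_order all_algebra.
Set Implicit Arguments. Unset Strict Implicit. Unset Printing Implicit Defensive.
Import Order.TTheory GRing.Theory Num.Theory.
Local Open Scope ring_scope.

Section Defs.
Variable R : realFieldType.

Definition a2 (K n j : nat) : R :=
  (j%:R * (K%:R - j%:R + 1)) / (4 * (n%:R) ^+ 2).

(* rstate K n l = ( prod_{j=1}^{l} a_{2j-1}^2 / r_{2j-1}^2 , r_{2l+1}^2 ),
   where r_{2l+1}^2 = a_{2l+2}^2 + a_{2l+1}^2 * prod_{j=1}^{l} a_{2j-1}^2/r_{2j-1}^2. *)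
Fixpoint rstate (K n l : nat) : R * R :=
  match l with
  | 0 => (1, a2 K n 2 + a2 K n 1 * 1)
  | l'.+1 =>
      let p := (rstate K n l').1 * (a2 K n (2 * l' + 1) / (rstate K n l').2) in
      (p, a2 K n (2 * l + 2) + a2 K n (2 * l + 1) * p)
  end.

Definition r2 (K n l : nat) : R := (rstate K n l).2.

(* A_k^{[2m+1]} = - a_{2m+1-2(k-1)}^2 / a_{2m+2-2(k-1)}^2  (used for 1 <= k <= m) *)
Definition Acoef (K n m k : nat) : R :=
  - (a2 K n (2 * m + 3 - 2 * k) / a2 K n (2 * m + 4 - 2 * k)).

(* B_k^{[2m+1]} = 1 + a_{2m+1-2k}^2 / a_{2m+2-2k}^2  (used for 0 <= k <= m) *)
Definition Bcoef (K n m k : nat) : R :=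
  1 + a2 K n (2 * m + 1 - 2 * k) / a2 K n (2 * m + 2 - 2 * k).

(* rec2 A B xm1 x0 k = (x_{k-1}, x_k) for the three-term recurrence
   x_k = B k * x_{k-1} + A k * x_{k-2}  (k >= 1), x_{-1} = xm1, x_0 = x0. *)
Fixpoint rec2 (A B : nat -> R) (xm1 x0 : R) (k : nat) : R * R :=
  match k with
  | 0 => (xm1, x0)
  | k'.+1 =>
      let u := (rec2 A B xm1 x0 k').1 in
      let v := (rec2 A B xm1 x0 k').2 in
      (v, B k * v + A k * u)
  end.

Definition calR (K n m k : nat) : R :=
  (rec2 (Acoef K n m) (Bcoef K n m) 1 (Bcoef K n m 0) k).2.

Definition calS (K n m k : nat) : R :=
  (rec2 (Acoef K n m) (Bcoef K n m) 0 1 k).2.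

End Defs.

From mathcomp Require Import all_boot all_order all_algebra.
From mathcomp Require Import ring lra zify.
Import Order.TTheory GRing.Theory Num.Theory.
Local Open Scope ring_scope.

(** The product [P_l = \prod_{j=1}^{l} a_{2j-1}^2 / r_{2j-1}^2] in the definition
    of [r_{2l+1}^2] satisfies [P_{l+1} = 1 - a_{2l+2}^2 / r_{2l+1}^2], because
    [a_{2l+1}^2 P_l = r_{2l+1}^2 - a_{2l+2}^2].  Hence the ratios
    [y_l = r_{2l+1}^2 / a_{2l+2}^2] satisfy [y_{l+1} = 1 + c_l - c_l / y_l] with
    [c_l = a_{2l+3}^2 / a_{2l+4}^2], that is [y_{m-k} = B_k + A_{k+1} / y_{m-k-1}],
    and [y_0 = B_m].  So [y_m] is a finite continued fraction, whose numerator and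
    denominator are the two solutions of the three-term recurrence:
    [R_m = y_m y_{m-1} ... y_0] and [S_m = y_{m-1} ... y_0].  All [y_l] are
    positive, so [S_m <> 0]. *)

Section ThreeTermRecurrence.
Variable R : realFieldType.

Lemma rec2S (A B : nat -> R) x y k :
  rec2 A B x y k.+1 =
  ((rec2 A B x y k).2, B k.+1 * (rec2 A B x y k).2 + A k.+1 * (rec2 A B x y k).1).
Proof. by []. Qed.

Lemma rec2_shift (A B : nat -> R) x y k :
  rec2 A B x y k.+1 =
  rec2 (fun i => A i.+1) (fun i => B i.+1) y (B 1%N * y + A 1%N * x) k.
Proof. by elim: k => [|k IH] //; rewrite [LHS]rec2S IH [RHS]rec2S. Qed.

Lemma rec2_expand_head (A B : nat -> R) k :
  rec2 A B 1 (B 0%N) k.+1 =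
  (B 0%N * (rec2 (fun i => A i.+1) (fun i => B i.+1) 1 (B 1%N) k).1
     + A 1%N * (rec2 (fun i => A i.+1) (fun i => B i.+1) 0 1 k).1,
   B 0%N * (rec2 (fun i => A i.+1) (fun i => B i.+1) 1 (B 1%N) k).2
     + A 1%N * (rec2 (fun i => A i.+1) (fun i => B i.+1) 0 1 k).2).
Proof.
elim: k => [|k IH]; first by congr pair => /=; ring.
by rewrite [LHS]rec2S IH [in RHS]rec2S [in RHS]rec2S /=; congr pair; ring.
Qed.

(* The hypotheses say [y i = B i + A i.+1 / y i.+1] and [y k = B k]; with the
   denominators cleared, no [y i] needs to be nonzero. *)
Lemma rec2_continued_fraction (A B y : nat -> R) k :
  (forall i, (i < k)%N -> y i * y i.+1 = B i * y i.+1 + A i.+1) ->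
  y k = B k ->
  (rec2 A B 1 (B 0%N) k).2 = \prod_(i < k.+1) y i /\
  (rec2 A B 0 1 k).2 = \prod_(i < k) y i.+1.
Proof.
elim: k A B y => [|k IH] A B y yE ykE; first by rewrite !big_ord1 big_ord0.
have [RE SE] := IH (fun i => A i.+1) (fun i => B i.+1) (fun i => y i.+1)
  (fun i ik => yE i.+1 ik) ykE.
have SE_succ : (rec2 A B 0 1 k.+1).2 = \prod_(i < k.+1) y i.+1.
  by rewrite rec2_shift mulr1 mulr0 addr0 RE.
split => //.
rewrite rec2_expand_head /= RE SE !big_ord_recl /=.
by rewrite mulrA -mulrDl -yE // mulrA.
Qed.

End ThreeTermRecurrence.

Section KrawtchoukRecurrence.
Variables (R : realFieldType) (K n : nat).
Hypothesis n_gt0 : (1 <= n)%N.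

Local Notation a2 := (a2 R K n).
Local Notation r2 := (r2 R K n).

Definition rprod l : R := (rstate R K n l).1.

Definition rratio l : R := r2 l / a2 (2 * l + 2).

Lemma a2_gt0 j : (0 < j)%N -> (j <= K)%N -> 0 < a2 j.
Proof.
move=> j_gt0 jK; rewrite /a2 divr_gt0 ?mulr_gt0 ?exprn_gt0 ?ltr0n //.
have : j%:R <= K%:R :> R by rewrite ler_nat.
lra.
Qed.

Lemma r2E l : r2 l = a2 (2 * l + 2) + a2 (2 * l + 1) * rprod l.
Proof. by case: l. Qed.

Lemma rprod_succ l : r2 l != 0 -> rprod l.+1 = 1 - a2 (2 * l + 2) / r2 l.
Proof.
move=> r2_neq0; rewrite /rprod /= -/(r2 l) -/(rprod l).
have -> : a2 (2 * l + 2) = r2 l - a2 (2 * l + 1) * rprod l by rewrite r2E; ring.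
by field.
Qed.

Lemma a2_lt_r2 l : (2 * l + 2 <= K)%N -> a2 (2 * l + 2) < r2 l.
Proof.
elim: l => [|l IH] lK.
  by rewrite r2E ltrDl /rprod /= mulr1 a2_gt0 //; lia.
have a2_lt_r2l : a2 (2 * l + 2) < r2 l by apply: IH; lia.
have r2_gt0 : 0 < r2 l by rewrite (lt_trans _ a2_lt_r2l) // a2_gt0 //; lia.
have rprod_gt0 : 0 < rprod l.+1.
  by rewrite rprod_succ ?gt_eqF // subr_gt0 ltr_pdivrMr // mul1r.
by rewrite r2E ltrDl mulr_gt0 // a2_gt0 //; lia.
Qed.

Lemma rratio_gt0 l : (2 * l + 2 <= K)%N -> 0 < rratio l.
Proof.
move=> lK; have a2_pos : 0 < a2 (2 * l + 2) by rewrite a2_gt0 //; lia.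
by rewrite divr_gt0 // (lt_trans a2_pos) // a2_lt_r2.
Qed.

Lemma rratio0 m : (2 <= K)%N -> rratio 0 = Bcoef R K n m m.
Proof.
move=> K_ge2; have a2_pos : 0 < a2 2 by rewrite a2_gt0.
rewrite /rratio /Bcoef r2E /rprod /= mulr1.
have -> : (2 * m + 1 - 2 * m = 1)%N by lia.
have -> : (2 * m + 2 - 2 * m = 2)%N by lia.
by field; rewrite gt_eqF.
Qed.

Lemma rratio_succ l : (2 * l + 4 <= K)%N ->
  rratio l.+1 * rratio l =
  (1 + a2 (2 * l + 3) / a2 (2 * l + 4)) * rratio l - a2 (2 * l + 3) / a2 (2 * l + 4).
Proof.
move=> lK.
have a2_2_pos : 0 < a2 (2 * l + 2) by rewrite a2_gt0 //; lia.
have a2_4_pos : 0 < a2 (2 * l + 4) by rewrite a2_gt0 //; lia.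
have r2_pos : 0 < r2 l by rewrite (lt_trans a2_2_pos) // a2_lt_r2 //; lia.
rewrite /rratio r2E rprod_succ ?gt_eqF //.
have -> : (2 * l.+1 + 2 = 2 * l + 4)%N by lia.
have -> : (2 * l.+1 + 1 = 2 * l + 3)%N by lia.
by field; rewrite !gt_eqF.
Qed.

Lemma rratio_rev_step m i : (2 * m + 2 <= K)%N -> (i < m)%N ->
  rratio (m - i) * rratio (m - i.+1) =
  Bcoef R K n m i * rratio (m - i.+1) + Acoef R K n m i.+1.
Proof.
move=> mK im; have [l m_eq] : exists l, m = (i + l).+1 by exists (m - i.+1)%N; lia.
subst m.
have -> : ((i + l).+1 - i = l.+1)%N by lia.
have -> : ((i + l).+1 - i.+1 = l)%N by lia.
rewrite rratio_succ /Bcoef /Acoef; last by lia.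
have -> : (2 * (i + l).+1 + 1 - 2 * i = 2 * l + 3)%N by lia.
have -> : (2 * (i + l).+1 + 2 - 2 * i = 2 * l + 4)%N by lia.
have -> : (2 * (i + l).+1 + 3 - 2 * i.+1 = 2 * l + 3)%N by lia.
by have -> : (2 * (i + l).+1 + 4 - 2 * i.+1 = 2 * l + 4)%N by lia.
Qed.

End KrawtchoukRecurrence.

Theorem lemma1 (R : realFieldType) (K m n : nat) (hn : (1 <= n)%N)
  (hK : (2 * m + 2 <= K)%N) :
  r2 R K n m / a2 R K n (2 * m + 2) = calR R K n m m / calS R K n m m.
Proof.
pose y i := rratio R K n (m - i).
have ymE : y m = Bcoef R K n m m by rewrite /y subnn (rratio0 R K n hn m) //; lia.
have [calRE calSE] := @rec2_continued_fraction R _ _ y m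
  (fun i => rratio_rev_step R K n hn m i hK) ymE.
rewrite /calR /calS calRE calSE big_ord_recl mulfK; first by rewrite /y subn0.
by apply/prodf_neq0 => i _; rewrite gt_eqF // (rratio_gt0 R K n hn) //; lia.
Qed.
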